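(* Let $\beta>0$. For every $x\in\mathbb N$ and $h\in(0,\beta/2)$, $$\kappa^x(h):=\widetilde{\mathbf P}_h\big(X_i>-x\ \ \forall i\in\mathbb N\big)=1-e^{-2hx}\,\frac{1-e^{h-\beta/2}}{1-e^{-h-\beta/2}}.$$ Moreover, for every $c>0$ and every $[h_1,h_2]\subset(0,\beta/2)$, $$\lim_{k\to\infty}\ \sup_{0\le x\le c\log k,\ h\in[h_1,h_2]}\big|\widetilde{\mathbf P}_h(X_i>-x,\ 1\le i\le k)-\kappa^x(h)\big|=0.$$
   Context: $c_\beta=\frac{1+e^{-\beta/2}}{1-e^{-\beta/2}}$, $\mathbf P_\beta(k)=e^{-\beta|k|/2}/c_\beta$ on $\mathbb Z$, $\mathcal L(h)=\log\sum_ke^{hk}\mathbf P_\beta(k)$ for $|h|<\beta/2$. For $|h|<\beta/2$, $\widetilde{\mathbf P}_h$ is the law under which $X=(X_i)_{i\ge0}$ is a random walk with $X_0=0$ and i.i.d. increments of law $\widetilde{\mathbf P}_h(k)=\mathbf P_\beta(k)e^{hk-\mathcal L(h)}$, $k\in\mathbb Z$. *)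

From Stdlib Require Import Reals ZArith.
From Coquelicot Require Import Coquelicot.
Open Scope R_scope.

Definition sumZ (f : Z -> R) : R :=
  f 0%Z + Series (fun n : nat => f (Z.of_nat (S n)) + f (- Z.of_nat (S n))%Z).

Definition c_beta (beta : R) : R :=
  (1 + exp (- beta / 2)) / (1 - exp (- beta / 2)).

Definition P_beta (beta : R) (k : Z) : R :=
  exp (- beta * Rabs (IZR k) / 2) / c_beta beta.

Definition Lcal (beta h : R) : R :=
  ln (sumZ (fun k => exp (h * IZR k) * P_beta beta k)).

Definition Ptilde (beta h : R) (k : Z) : R :=
  P_beta beta k * exp (h * IZR k - Lcal beta h).

(* surv beta h k x = ~P_h( X_i > -x for all 1 <= i <= k ), where X is the
   random walk with X_0 = 0 and i.i.d. increments of law Ptilde beta h.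
   Computed as the iterated sum over increment paths (first-step
   decomposition): the walk after its first step j is again a walk, and the
   remaining constraint is X'_i > -(x + j). *)
Fixpoint surv (beta h : R) (k : nat) (x : Z) : R :=
  match k with
  | O => 1
  | S k' => sumZ (fun j => Ptilde beta h j *
                          (if Z.ltb (- x) j then surv beta h k' (x + j)%Z else 0))
  end.

(* kappa^x(h) = ~P_h( X_i > -x for all i >= 1 ), the limit (continuity of the
   probability measure from above) of the finite-horizon probabilities. *)
Definition kappa (beta h : R) (x : nat) : R :=
  real (Lim_seq (fun k => surv beta h k (Z.of_nat x))).

(* Write p = exp (h - beta/2), q = exp (-h - beta/2): the tilted increment law puts
   mass p^k / Z on k >= 0 and q^|k| / Z on k <= 0.  As exp (-2h) p = q, tilting by
   exp (-2hk) swaps p and q; hence g(z) = 1 - exp (-2hz) (1 - p) / (1 - q) is harmonic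
   for the walk killed on entering (-oo, 0], the constant (1 - p) / (1 - q) being the
   one for which the mass g would receive from the killed region cancels.  With
   rho = E_h[exp (-h X_1)] < 1, induction on k gives
     g(z) <= P(X_i > -z, 1 <= i <= k) <= g(z) + rho^k exp (-hz),
   hence kappa^x(h) = g(x).  As rho decreases in h, the error is at most rho(h1)^k,
   uniformly in x and in h in [h1, h2]. *)

From Stdlib Require Import Reals ZArith Lra Lia.
From Coquelicot Require Import Coquelicot.
Open Scope R_scope.

Definition is_sumZ (f : Z -> R) (l : R) : Prop :=
  is_series (fun n => f (Z.of_nat (S n)) + f (- Z.of_nat (S n))%Z) (l - f 0%Z).

Lemma sumZ_eq (f : Z -> R) (l : R) : is_sumZ f l -> sumZ f = l.
Proof. intro Hf. unfold sumZ. rewrite (is_series_unique _ _ Hf). ring. Qed.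

Lemma is_sumZ_ext (f g : Z -> R) (l : R) :
  (forall j, f j = g j) -> is_sumZ f l -> is_sumZ g l.
Proof.
  intros Hfg Hf. unfold is_sumZ. rewrite <- Hfg.
  apply (is_series_ext _ _ _ (fun n => f_equal2 Rplus (Hfg _) (Hfg _)) Hf).
Qed.

Lemma is_sumZ_plus (f g : Z -> R) (lf lg : R) :
  is_sumZ f lf -> is_sumZ g lg -> is_sumZ (fun j => f j + g j) (lf + lg).
Proof.
  intros Hf Hg. unfold is_sumZ.
  replace (lf + lg - (f 0%Z + g 0%Z)) with (plus (lf - f 0%Z) (lg - g 0%Z))
    by (unfold plus; simpl; ring).
  eapply is_series_ext; [|exact (is_series_plus _ _ _ _ Hf Hg)].
  intro n. unfold plus; simpl. ring.
Qed.

Lemma is_sumZ_scal (c : R) (f : Z -> R) (l : R) :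
  is_sumZ f l -> is_sumZ (fun j => c * f j) (c * l).
Proof.
  intro Hf. unfold is_sumZ.
  replace (c * l - c * f 0%Z) with (scal c (l - f 0%Z))
    by (unfold scal; simpl; unfold mult; simpl; ring).
  eapply is_series_ext; [|exact (is_series_scal_l _ _ _ Hf)].
  intro n. unfold scal; simpl; unfold mult; simpl. ring.
Qed.

Lemma is_series_telescope (A : nat -> R) :
  is_lim_seq A 0 -> is_series (fun n => A n - A (S n)) (A 0%nat).
Proof.
  intro HA. unfold is_series. change (is_lim_seq (sum_n (fun n => A n - A (S n))) (A 0%nat)).
  apply (is_lim_seq_ext (fun n => A 0%nat - A (S n))).
  - intro n. induction n as [|n IH].
    + rewrite sum_O. reflexivity.
    + rewrite sum_Sn, <- IH. unfold plus; simpl. ring.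
  - replace (Finite (A 0%nat)) with (Rbar_minus (A 0%nat) 0) by (simpl; f_equal; ring).
    apply is_lim_seq_minus'; [apply is_lim_seq_const | exact (proj1 (is_lim_seq_incr_1 A 0) HA)].
Qed.

Lemma is_sumZ_telescope (f : Z -> R) (A B : nat -> R) :
  is_lim_seq A 0 -> is_lim_seq B 0 ->
  (forall n, f (Z.of_nat (S n)) = A n - A (S n)) ->
  (forall n, f (- Z.of_nat n)%Z = B n - B (S n)) ->
  is_sumZ f (A 0%nat + B 0%nat).
Proof.
  intros HA HB Hpos Hneg. unfold is_sumZ.
  replace (A 0%nat + B 0%nat - f 0%Z) with (plus (A 0%nat) (B 1%nat))
    by (pose proof (Hneg 0%nat) as H0; simpl in H0; rewrite H0; unfold plus; simpl; ring).
  eapply is_series_ext;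
    [|exact (is_series_plus _ _ _ _ (is_series_telescope A HA)
               (is_series_telescope (fun n => B (S n)) (proj1 (is_lim_seq_incr_1 B 0) HB)))].
  intro n. rewrite Hpos, Hneg. reflexivity.
Qed.

Lemma is_lim_seq_geom_scal (c r : R) : 0 <= r < 1 -> is_lim_seq (fun n => c * r ^ n) 0.
Proof.
  intro Hr. replace (Finite 0) with (Rbar_mult c 0) by (simpl; f_equal; ring).
  apply is_lim_seq_scal_l, is_lim_seq_geom. rewrite Rabs_pos_eq; lra.
Qed.

Lemma is_sumZ_geometric (f : Z -> R) (r s : R) : 0 <= r < 1 -> 0 <= s < 1 ->
  (forall n, f (Z.of_nat n) = r ^ n) -> (forall n, f (- Z.of_nat n)%Z = s ^ n) ->
  is_sumZ f (r / (1 - r) + 1 / (1 - s)).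
Proof.
  intros Hr Hs Hpos Hneg.
  replace (r / (1 - r) + 1 / (1 - s)) with (r / (1 - r) * r ^ 0 + / (1 - s) * s ^ 0)
    by (simpl; field; lra).
  apply (is_sumZ_telescope f (fun n => r / (1 - r) * r ^ n) (fun n => / (1 - s) * s ^ n)).
  - now apply is_lim_seq_geom_scal.
  - now apply is_lim_seq_geom_scal.
  - intro n. rewrite Hpos. simpl. field. lra.
  - intro n. rewrite Hneg. simpl. field. lra.
Qed.

Lemma is_series_le (a b : nat -> R) (la lb : R) :
  (forall n, a n <= b n) -> is_series a la -> is_series b lb -> la <= lb.
Proof.
  intros Hab Ha Hb.
  apply (is_lim_seq_le (sum_n a) (sum_n b) la lb); [|exact Ha|exact Hb].
  intro n. now apply sum_n_m_le.
Qed.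

Lemma is_sumZ_le (f g : Z -> R) (lf lg : R) :
  (forall j, f j <= g j) -> is_sumZ f lf -> is_sumZ g lg -> lf <= lg.
Proof.
  intros Hfg Hf Hg.
  assert (H := is_series_le _ _ _ _ (fun n => Rplus_le_compat _ _ _ _ (Hfg _) (Hfg _)) Hf Hg).
  specialize (Hfg 0%Z). lra.
Qed.

Lemma ex_sumZ_between (f g h : Z -> R) (lg lh : R) :
  (forall j, g j <= f j <= h j) -> is_sumZ g lg -> is_sumZ h lh -> exists l, is_sumZ f l.
Proof.
  intros Hf Hg Hh.
  assert (Hhg := is_sumZ_plus _ _ _ _ Hh (is_sumZ_scal (-1) _ _ Hg)).
  unfold is_sumZ in Hhg; cbv beta in Hhg.
  assert (Efg : ex_series (fun n => (f (Z.of_nat (S n)) + - 1 * g (Z.of_nat (S n)))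
                                  + (f (- Z.of_nat (S n))%Z + - 1 * g (- Z.of_nat (S n))%Z))).
  { eapply (@ex_series_le R_AbsRing R_CompleteNormedModule); [|eexists; exact Hhg].
    intro n. change norm with Rabs.
    pose proof (Hf (Z.of_nat (S n))). pose proof (Hf (- Z.of_nat (S n))%Z).
    rewrite Rabs_pos_eq; lra. }
  destruct Efg as [lfg Hfg].
  exists (lfg + (f 0%Z + - 1 * g 0%Z) + lg).
  apply (is_sumZ_ext (fun j => (f j + - 1 * g j) + g j)); [intro; ring|].
  apply is_sumZ_plus; [|exact Hg]. unfold is_sumZ.
  now rewrite Rplus_minus_r.
Qed.

Lemma sumZ_between (f g h : Z -> R) (lg lh : R) :
  (forall j, g j <= f j <= h j) -> is_sumZ g lg -> is_sumZ h lh -> lg <= sumZ f <= lh.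
Proof.
  intros Hf Hg Hh. destruct (ex_sumZ_between f g h lg lh Hf Hg Hh) as [l Hl].
  rewrite (sumZ_eq _ _ Hl).
  split; [apply (is_sumZ_le g f) | apply (is_sumZ_le f h)]; auto; intro j; apply Hf.
Qed.

Lemma exp_le_exp (x y : R) : x <= y -> exp x <= exp y.
Proof. intros [Hxy | ->]; [left; now apply exp_increasing | apply Rle_refl]. Qed.

Lemma exp_lt_1 (x : R) : x < 0 -> exp x < 1.
Proof. intro Hx. rewrite <- exp_0. now apply exp_increasing. Qed.

Lemma exp_mul_INR (c : R) (n : nat) : exp (c * INR n) = exp c ^ n.
Proof.
  induction n as [|n IH]; [simpl; now rewrite Rmult_0_r, exp_0|].
  rewrite S_INR, Rmult_plus_distr_l, Rmult_1_r, exp_plus, IH. simpl. ring.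
Qed.

Lemma exp_mul_IZR_nat (c : R) (n : nat) : exp (c * IZR (Z.of_nat n)) = exp c ^ n.
Proof. now rewrite <- INR_IZR_INZ, exp_mul_INR. Qed.

Lemma exp_mul_IZR_opp_nat (c : R) (n : nat) : exp (c * IZR (- Z.of_nat n)) = exp (- c) ^ n.
Proof. rewrite <- exp_mul_IZR_nat, opp_IZR. f_equal. ring. Qed.

Lemma exp_plus_exp_opp_lt (s t : R) : 0 <= s < t -> exp s + exp (- s) < exp t + exp (- t).
Proof.
  intros Hst. rewrite !exp_Ropp.
  assert (Hu : 1 <= exp s) by (rewrite <- exp_0; now apply exp_le_exp).
  assert (Huv : exp s < exp t) by now apply exp_increasing.
  replace (exp t + / exp t)
    with (exp s + / exp s + (exp t - exp s) * (exp s * exp t - 1) / (exp s * exp t))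
    by (field; lra).
  assert (0 < (exp t - exp s) * (exp s * exp t - 1) / (exp s * exp t)); [|lra].
  assert (1 < exp s * exp t) by nra.
  apply Rdiv_lt_0_compat; [apply Rmult_lt_0_compat|]; lra.
Qed.

Section TiltedLaw.

Variable beta : R.
Hypothesis Hbeta : 0 < beta.

(* [Zpart t] is the closed form of sum_k exp (t k - beta |k| / 2). *)
Definition Zpart (t : R) : R :=
  exp (t - beta / 2) / (1 - exp (t - beta / 2)) + 1 / (1 - exp (- t - beta / 2)).

Lemma c_beta_pos : 0 < c_beta beta.
Proof.
  unfold c_beta. assert (exp (- beta / 2) < 1) by (apply exp_lt_1; lra).
  pose proof (exp_pos (- beta / 2)). apply Rdiv_lt_0_compat; lra.
Qed.

Lemma Zpart_pos (t : R) : Rabs t < beta / 2 -> 0 < Zpart t.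
Proof.
  intro Ht. apply Rabs_def2 in Ht. unfold Zpart.
  assert (exp (t - beta / 2) < 1) by (apply exp_lt_1; lra).
  assert (exp (- t - beta / 2) < 1) by (apply exp_lt_1; lra).
  pose proof (exp_pos (t - beta / 2)). pose proof (exp_pos (- t - beta / 2)).
  assert (0 <= exp (t - beta / 2) / (1 - exp (t - beta / 2)))
    by (apply Rlt_le, Rdiv_lt_0_compat; lra).
  assert (0 < 1 / (1 - exp (- t - beta / 2))) by (apply Rdiv_lt_0_compat; lra).
  lra.
Qed.

Lemma Zpart_eq (t : R) : Rabs t < beta / 2 ->
  Zpart t = (1 - exp (- beta / 2) ^ 2)
            / (1 + exp (- beta / 2) ^ 2 - exp (- beta / 2) * (exp t + exp (- t)))
  /\ 0 < 1 + exp (- beta / 2) ^ 2 - exp (- beta / 2) * (exp t + exp (- t)).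
Proof.
  intro Ht. apply Rabs_def2 in Ht. unfold Zpart.
  assert (Hp : exp (t - beta / 2) < 1) by (apply exp_lt_1; lra).
  assert (Hq : exp (- t - beta / 2) < 1) by (apply exp_lt_1; lra).
  replace (t - beta / 2) with (t + - beta / 2) in * by field.
  replace (- t - beta / 2) with (- t + - beta / 2) in * by field.
  rewrite !exp_plus, exp_Ropp in *.
  pose proof (exp_pos t). pose proof (exp_pos (- beta / 2)).
  assert (Hden : 1 + exp (- beta / 2) ^ 2 - exp (- beta / 2) * (exp t + / exp t)
                 = (1 - exp t * exp (- beta / 2)) * (1 - / exp t * exp (- beta / 2)))
    by (field; lra).
  assert (exp (- beta / 2) < exp t) by (apply exp_increasing; lra).
  rewrite Hden. split; [field; repeat split | apply Rmult_lt_0_compat]; lra.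
Qed.

Lemma Zpart_lt (s t : R) : 0 <= s < t -> t < beta / 2 -> Zpart s < Zpart t.
Proof.
  intros Hst Ht.
  destruct (Zpart_eq s ltac:(rewrite Rabs_pos_eq; lra)) as [-> Hs].
  destruct (Zpart_eq t ltac:(rewrite Rabs_pos_eq; lra)) as [-> Htpos].
  assert (Ha : 0 < exp (- beta / 2) < 1) by (split; [apply exp_pos | apply exp_lt_1; lra]).
  assert (Hcosh := exp_plus_exp_opp_lt s t Hst).
  unfold Rdiv. apply Rmult_lt_compat_l; [nra|].
  apply Rinv_lt_contravar; [now apply Rmult_lt_0_compat | nra].
Qed.

Lemma exp_mul_P_beta (t : R) (j : Z) :
  exp (t * IZR j) * P_beta beta j = exp (t * IZR j - beta / 2 * Rabs (IZR j)) / c_beta beta.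
Proof.
  unfold P_beta, Rminus. rewrite exp_plus.
  replace (- (beta / 2 * Rabs (IZR j))) with (- beta * Rabs (IZR j) / 2) by field.
  unfold Rdiv. ring.
Qed.

Lemma is_sumZ_exp_mul_P_beta (t : R) : Rabs t < beta / 2 ->
  is_sumZ (fun j => exp (t * IZR j) * P_beta beta j) (Zpart t / c_beta beta).
Proof.
  intro Ht. apply Rabs_def2 in Ht.
  assert (Hc := c_beta_pos).
  apply (is_sumZ_ext (fun j => / c_beta beta * exp (t * IZR j - beta / 2 * Rabs (IZR j)))).
  { intro j. rewrite exp_mul_P_beta. unfold Rdiv. ring. }
  replace (Zpart t / c_beta beta) with (/ c_beta beta * Zpart t) by (unfold Rdiv; ring).
  apply is_sumZ_scal, is_sumZ_geometric.
  - split; [left; apply exp_pos | apply exp_lt_1; lra].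
  - split; [left; apply exp_pos | apply exp_lt_1; lra].
  - intro n. rewrite <- INR_IZR_INZ, Rabs_pos_eq by apply pos_INR.
    rewrite <- exp_mul_INR. f_equal. ring.
  - intro n. rewrite opp_IZR, <- INR_IZR_INZ, Rabs_Ropp, Rabs_pos_eq by apply pos_INR.
    rewrite <- exp_mul_INR. f_equal. ring.
Qed.

Lemma exp_Lcal (h : R) : Rabs h < beta / 2 -> exp (Lcal beta h) = Zpart h / c_beta beta.
Proof.
  intro Hh. unfold Lcal. rewrite (sumZ_eq _ _ (is_sumZ_exp_mul_P_beta h Hh)).
  apply exp_ln, Rdiv_lt_0_compat; [now apply Zpart_pos | apply c_beta_pos].
Qed.

Lemma Ptilde_eq (h : R) (j : Z) : Rabs h < beta / 2 ->
  Ptilde beta h j = c_beta beta / Zpart h * (exp (h * IZR j) * P_beta beta j).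
Proof.
  intro Hh. unfold Ptilde, Rminus. rewrite exp_plus, exp_Ropp, exp_Lcal by exact Hh.
  assert (Hc := c_beta_pos). assert (HZ := Zpart_pos h Hh). field. lra.
Qed.

Lemma Ptilde_nonneg (h : R) (j : Z) : Rabs h < beta / 2 -> 0 <= Ptilde beta h j.
Proof.
  intro Hh. rewrite Ptilde_eq, exp_mul_P_beta by exact Hh.
  assert (Hc := c_beta_pos). assert (HZ := Zpart_pos h Hh).
  apply Rmult_le_pos; left; apply Rdiv_lt_0_compat; auto using exp_pos.
Qed.

Lemma Ptilde_nat (h : R) (n : nat) : Rabs h < beta / 2 ->
  Ptilde beta h (Z.of_nat n) = exp (h - beta / 2) ^ n / Zpart h.
Proof.
  intro Hh. rewrite Ptilde_eq, exp_mul_P_beta by exact Hh.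
  rewrite <- INR_IZR_INZ, Rabs_pos_eq by apply pos_INR. rewrite <- exp_mul_INR.
  replace ((h - beta / 2) * INR n) with (h * INR n - beta / 2 * INR n) by ring.
  assert (Hc := c_beta_pos). assert (HZ := Zpart_pos h Hh). field. lra.
Qed.

Lemma Ptilde_opp_nat (h : R) (n : nat) : Rabs h < beta / 2 ->
  Ptilde beta h (- Z.of_nat n)%Z = exp (- h - beta / 2) ^ n / Zpart h.
Proof.
  intro Hh. rewrite Ptilde_eq, exp_mul_P_beta by exact Hh.
  rewrite opp_IZR, <- INR_IZR_INZ, Rabs_Ropp, Rabs_pos_eq by apply pos_INR.
  rewrite <- exp_mul_INR.
  replace ((- h - beta / 2) * INR n) with (h * - INR n - beta / 2 * INR n) by ring.
  assert (Hc := c_beta_pos). assert (HZ := Zpart_pos h Hh). field. lra.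
Qed.

Lemma is_sumZ_Ptilde_exp (h t : R) : Rabs h < beta / 2 -> Rabs (h + t) < beta / 2 ->
  is_sumZ (fun j => Ptilde beta h j * exp (t * IZR j)) (Zpart (h + t) / Zpart h).
Proof.
  intros Hh Hht.
  assert (Hc := c_beta_pos). assert (HZ := Zpart_pos h Hh).
  apply (is_sumZ_ext (fun j => c_beta beta / Zpart h * (exp ((h + t) * IZR j) * P_beta beta j))).
  { intro j. rewrite Ptilde_eq by exact Hh. rewrite Rmult_plus_distr_r, exp_plus. ring. }
  replace (Zpart (h + t) / Zpart h) with (c_beta beta / Zpart h * (Zpart (h + t) / c_beta beta))
    by (field; lra).
  now apply is_sumZ_scal, is_sumZ_exp_mul_P_beta.
Qed.

End TiltedLaw.

Section KilledWalk.

Variables beta h : R.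
Hypothesis Hbeta : 0 < beta.
Hypothesis Hh : 0 < h < beta / 2.

Local Notation p := (exp (h - beta / 2)).
Local Notation q := (exp (- h - beta / 2)).

Local Notation kappa_const := ((1 - p) / (1 - q)).

Definition kappa_closed (z : Z) : R := 1 - exp (-2 * h * IZR z) * kappa_const.

(* [rho] is E_h[exp (-h X_1)], see [is_sumZ_Ptilde_exp_decay]. *)
Definition rho : R := Zpart beta 0 / Zpart beta h.

Let Hh_abs : Rabs h < beta / 2.
Proof. rewrite Rabs_pos_eq; lra. Qed.

Let Hp : 0 < p < 1.
Proof. split; [apply exp_pos | apply exp_lt_1; lra]. Qed.

Let Hq : 0 < q < 1.
Proof. split; [apply exp_pos | apply exp_lt_1; lra]. Qed.

Let HZ : 0 < Zpart beta h.
Proof. now apply Zpart_pos. Qed.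

Lemma Ptilde_kappa_closed_nat (m n : nat) :
  Ptilde beta h (Z.of_nat n) * kappa_closed (Z.of_nat m + Z.of_nat n)
  = (p ^ n - exp (-2 * h) ^ m * kappa_const * q ^ n) / Zpart beta h.
Proof.
  rewrite Ptilde_nat by assumption. unfold kappa_closed.
  rewrite plus_IZR, Rmult_plus_distr_l, exp_plus, !exp_mul_IZR_nat.
  replace (q ^ n) with (exp (-2 * h) ^ n * p ^ n)
    by (rewrite <- Rpow_mult_distr, <- exp_plus; do 2 f_equal; ring).
  field. lra.
Qed.

Lemma Ptilde_kappa_closed_opp_nat (m n : nat) :
  Ptilde beta h (- Z.of_nat n) * kappa_closed (Z.of_nat m + - Z.of_nat n)
  = (q ^ n - exp (-2 * h) ^ m * kappa_const * p ^ n) / Zpart beta h.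
Proof.
  rewrite Ptilde_opp_nat by assumption. unfold kappa_closed.
  rewrite plus_IZR, Rmult_plus_distr_l, exp_plus, exp_mul_IZR_nat, exp_mul_IZR_opp_nat.
  replace (p ^ n) with (exp (- (-2 * h)) ^ n * q ^ n)
    by (rewrite <- Rpow_mult_distr, <- exp_plus; do 2 f_equal; ring).
  field. lra.
Qed.

Lemma is_sumZ_killed_kappa_closed (z : Z) : (0 <= z)%Z ->
  is_sumZ (fun j => Ptilde beta h j * (if (- z <? j)%Z then kappa_closed (z + j) else 0))
    (kappa_closed z).
Proof.
  intro Hz. destruct (Z_of_nat_complete z Hz) as [m ->].
  set (t0 := exp (-2 * h) ^ m).
  set (T := fun i => q ^ i / (1 - q) - t0 * kappa_const * p ^ i / (1 - p)).
  (* [T m = 0] is where the choice of the constant (1 - p) / (1 - q) enters. *)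
  assert (HT : T m = 0).
  { assert (Htp : t0 * p ^ m = q ^ m)
      by (unfold t0; rewrite <- Rpow_mult_distr, <- exp_plus; do 2 f_equal; ring).
    unfold T; cbv beta.
    replace (t0 * kappa_const * p ^ m) with (kappa_const * (t0 * p ^ m)) by ring.
    rewrite Htp. field. lra. }
  set (A := fun n => (p ^ S n / (1 - p) - t0 * kappa_const * q ^ S n / (1 - q)) / Zpart beta h).
  set (B := fun n => T (Nat.min n m) / Zpart beta h).
  replace (kappa_closed (Z.of_nat m)) with (A 0%nat + B 0%nat).
  2:{ unfold kappa_closed. rewrite exp_mul_IZR_nat. fold t0. unfold A, B, T; cbv beta.
      simpl. unfold Zpart. field. repeat split; nra. }
  apply is_sumZ_telescope.
  - apply (is_lim_seq_ext (fun n => p / (1 - p) / Zpart beta h * p ^ n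
                                   + - (t0 * kappa_const * q / (1 - q) / Zpart beta h) * q ^ n)).
    { intro n. unfold A. simpl. field. lra. }
    replace (Finite 0) with (Rbar_plus 0 0) by (simpl; f_equal; ring).
    apply is_lim_seq_plus'; apply is_lim_seq_geom_scal; lra.
  - apply (is_lim_seq_incr_n _ m), (is_lim_seq_ext (fun _ => 0)); [|apply is_lim_seq_const].
    intro n. unfold B. rewrite Nat.min_r, HT by lia. field. lra.
  - intro n.
    replace (- Z.of_nat m <? Z.of_nat (S n))%Z with true by (symmetry; apply Z.ltb_lt; lia).
    rewrite Ptilde_kappa_closed_nat. fold t0. unfold A.
    change (p ^ S (S n)) with (p * p ^ S n). change (q ^ S (S n)) with (q * q ^ S n).
    field. lra.
  - intro n. unfold B. destruct (Nat.lt_ge_cases n m) as [Hnm | Hnm].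
    + replace (- Z.of_nat m <? - Z.of_nat n)%Z with true by (symmetry; apply Z.ltb_lt; lia).
      rewrite Ptilde_kappa_closed_opp_nat, Nat.min_l, Nat.min_l by lia. fold t0. unfold T.
      change (p ^ S n) with (p * p ^ n). change (q ^ S n) with (q * q ^ n).
      field. lra.
    + replace (- Z.of_nat m <? - Z.of_nat n)%Z with false by (symmetry; apply Z.ltb_ge; lia).
      rewrite Nat.min_r, Nat.min_r by lia. field. lra.
Qed.

Lemma is_sumZ_Ptilde_exp_decay (z : Z) :
  is_sumZ (fun j => Ptilde beta h j * exp (- h * IZR (z + j))) (rho * exp (- h * IZR z)).
Proof.
  assert (H := is_sumZ_Ptilde_exp beta Hbeta h (- h) Hh_abs
                 ltac:(rewrite Rplus_opp_r, Rabs_R0; lra)).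
  rewrite Rplus_opp_r in H.
  apply (is_sumZ_ext (fun j => exp (- h * IZR z) * (Ptilde beta h j * exp (- h * IZR j)))).
  { intro j. rewrite plus_IZR, Rmult_plus_distr_l, exp_plus. ring. }
  rewrite (Rmult_comm rho). now apply is_sumZ_scal.
Qed.

Lemma rho_bounds : 0 <= rho < 1.
Proof.
  assert (H0 : 0 < Zpart beta 0) by (apply Zpart_pos; try rewrite Rabs_R0; lra).
  assert (H0h : Zpart beta 0 < Zpart beta h) by (apply Zpart_lt; lra).
  unfold rho. split; [left; now apply Rdiv_lt_0_compat|].
  apply (Rmult_lt_reg_r (Zpart beta h)); [exact HZ|]. unfold Rdiv.
  rewrite Rmult_assoc, Rinv_l, Rmult_1_r, Rmult_1_l; lra.
Qed.

Let kappa_const_bounds : 0 < kappa_const <= 1.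
Proof.
  assert (q < p) by (apply exp_increasing; lra).
  split; [apply Rdiv_lt_0_compat; lra|].
  apply (Rmult_le_reg_r (1 - q)); [lra|]. unfold Rdiv.
  rewrite Rmult_assoc, Rinv_l, Rmult_1_r, Rmult_1_l; lra.
Qed.

Lemma kappa_closed_bounds (z : Z) : (0 <= z)%Z ->
  0 <= kappa_closed z <= 1 /\ 1 <= kappa_closed z + exp (- h * IZR z).
Proof.
  intro Hz. apply IZR_le in Hz. unfold kappa_closed.
  assert (Hlt1 : exp (-2 * h * IZR z) <= exp (- h * IZR z)) by (apply exp_le_exp; nra).
  assert (Hle1 : exp (- h * IZR z) <= 1) by (rewrite <- exp_0; apply exp_le_exp; nra).
  pose proof (exp_pos (-2 * h * IZR z)).
  split; [split|]; nra.
Qed.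

Lemma surv_bounds (k : nat) (z : Z) : (0 <= z)%Z ->
  kappa_closed z <= surv beta h k z <= kappa_closed z + rho ^ k * exp (- h * IZR z).
Proof.
  revert z. induction k as [|k IH]; intros z Hz.
  - simpl. destruct (kappa_closed_bounds z Hz). lra.
  - simpl surv.
    replace (kappa_closed z + rho ^ S k * exp (- h * IZR z))
      with (kappa_closed z + rho ^ k * (rho * exp (- h * IZR z))) by (simpl; ring).
    refine (sumZ_between _ _ _ _ _ _ (is_sumZ_killed_kappa_closed z Hz)
              (is_sumZ_plus _ _ _ _ (is_sumZ_killed_kappa_closed z Hz)
                 (is_sumZ_scal (rho ^ k) _ _ (is_sumZ_Ptilde_exp_decay z)))).
    intro j. cbv beta. pose proof (Ptilde_nonneg beta Hbeta h j Hh_abs).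
    pose proof (exp_pos (- h * IZR (z + j))).
    assert (0 <= rho ^ k) by (apply pow_le; apply rho_bounds).
    destruct (- z <? j)%Z eqn:Hj.
    + apply Z.ltb_lt in Hj. destruct (IH (z + j)%Z ltac:(lia)).
      split; [apply Rmult_le_compat_l; lra|].
      replace (Ptilde beta h j * kappa_closed (z + j)
               + rho ^ k * (Ptilde beta h j * exp (- h * IZR (z + j))))
        with (Ptilde beta h j * (kappa_closed (z + j) + rho ^ k * exp (- h * IZR (z + j))))
        by ring.
      apply Rmult_le_compat_l; lra.
    + rewrite !Rmult_0_r. split; [lra|]. rewrite Rplus_0_l.
      apply Rmult_le_pos; [|apply Rmult_le_pos]; lra.
Qed.

Lemma kappa_eq_closed (x : nat) : kappa beta h x = kappa_closed (Z.of_nat x).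
Proof.
  unfold kappa.
  assert (Hx : (0 <= Z.of_nat x)%Z) by lia.
  replace (kappa_closed (Z.of_nat x)) with (real (kappa_closed (Z.of_nat x))) by reflexivity.
  f_equal. apply is_lim_seq_unique.
  apply (is_lim_seq_le_le (fun _ => kappa_closed (Z.of_nat x)) _
           (fun k => kappa_closed (Z.of_nat x) + rho ^ k * exp (- h * IZR (Z.of_nat x)))).
  - intro k. now apply surv_bounds.
  - apply is_lim_seq_const.
  - replace (Finite (kappa_closed (Z.of_nat x)))
      with (Rbar_plus (kappa_closed (Z.of_nat x)) 0) by (simpl; f_equal; ring).
    apply is_lim_seq_plus'; [apply is_lim_seq_const|].
    apply (is_lim_seq_ext (fun k => exp (- h * IZR (Z.of_nat x)) * rho ^ k)); [intro; ring|].
    apply is_lim_seq_geom_scal, rho_bounds.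
Qed.

End KilledWalk.

Lemma rho_antitone (beta h1 h : R) : 0 < beta -> 0 < h1 <= h -> h < beta / 2 ->
  rho beta h <= rho beta h1.
Proof.
  intros Hbeta Hh1 Hh. unfold rho.
  assert (H0 : 0 < Zpart beta 0) by (apply Zpart_pos; try rewrite Rabs_R0; lra).
  assert (H1 : 0 < Zpart beta h1) by (apply Zpart_pos; try rewrite Rabs_pos_eq; lra).
  assert (H1h : Zpart beta h1 <= Zpart beta h).
  { destruct (Rle_lt_or_eq_dec _ _ (proj2 Hh1)) as [Hlt | ->]; [|apply Rle_refl].
    left. apply Zpart_lt; lra. }
  unfold Rdiv. apply Rmult_le_compat_l; [lra|]. now apply Rinv_le_contravar.
Qed.

Lemma surv_sub_kappa_bounds (beta h1 h : R) (k x : nat) :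
  0 < beta -> 0 < h1 <= h -> h < beta / 2 ->
  0 <= surv beta h k (Z.of_nat x) - kappa beta h x <= rho beta h1 ^ k.
Proof.
  intros Hbeta Hh1 Hh. assert (Hh' : 0 < h < beta / 2) by lra.
  rewrite (kappa_eq_closed beta h Hbeta Hh').
  destruct (surv_bounds beta h Hbeta Hh' k (Z.of_nat x) ltac:(lia)) as [Hlo Hup].
  destruct (rho_bounds beta h Hbeta Hh') as [Hrho0 _].
  assert (Hdecay : exp (- h * IZR (Z.of_nat x)) <= 1).
  { rewrite <- exp_0. apply exp_le_exp. pose proof (IZR_le 0 _ (Zle_0_nat x)). nra. }
  assert (Hpow : rho beta h ^ k <= rho beta h1 ^ k)
    by (apply pow_incr; split; [exact Hrho0 | now apply rho_antitone]).
  assert (0 <= rho beta h ^ k) by now apply pow_le.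
  pose proof (exp_pos (- h * IZR (Z.of_nat x))).
  split; nra.
Qed.

Theorem mainTheorem8 (beta : R) (Hbeta : 0 < beta) :
  (forall (x : nat) (h : R), 0 < h < beta / 2 ->
     kappa beta h x =
     1 - exp (- 2 * h * INR x) * ((1 - exp (h - beta / 2)) / (1 - exp (- h - beta / 2))))
  /\
  (forall (c h1 h2 : R), 0 < c -> 0 < h1 -> h1 <= h2 -> h2 < beta / 2 ->
     forall eps : R, 0 < eps ->
     exists N : nat, forall k : nat, (N <= k)%nat ->
       forall (x : nat) (h : R), INR x <= c * ln (INR k) -> h1 <= h <= h2 ->
         Rabs (surv beta h k (Z.of_nat x) - kappa beta h x) <= eps).
Proof.
  split.
  - intros x h Hh. rewrite kappa_eq_closed by assumption.
    unfold kappa_closed. now rewrite <- INR_IZR_INZ.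
  - intros c h1 h2 _ Hh1 H12 Hh2 eps Heps.
    destruct (rho_bounds beta h1 Hbeta ltac:(lra)) as [Hrho0 Hrho1].
    assert (Hgeom : is_lim_seq (fun k => rho beta h1 ^ k) 0)
      by (apply is_lim_seq_geom; rewrite Rabs_pos_eq; lra).
    destruct (proj2 (is_lim_seq_spec _ _) Hgeom (mkposreal eps Heps)) as [N HN].
    exists N. intros k Hk x h _ Hh.
    destruct (surv_sub_kappa_bounds beta h1 h k x Hbeta ltac:(lra) ltac:(lra)) as [Hlo Hup].
    specialize (HN k Hk). simpl in HN.
    rewrite Rminus_0_r, Rabs_pos_eq in HN by (apply pow_le; lra).
    rewrite Rabs_pos_eq; lra.
Qed.
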